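(* Let $\rho_A,\rho_B\in\mathcal{P}(\mathcal{X})$ with $\mathcal{W}(\rho_A,\rho_B)<\infty$, and let $\rho:[0,1]\to\mathbb{R}^{\mathcal{X}}$ and $m:[0,1]\to\mathbb{R}^{\mathcal{X}\times\mathcal{X}}$ be measurable and optimal, i.e. $\mathcal{E}(\rho,m)=\inf\mathcal{E}=\mathcal{W}(\rho_A,\rho_B)^2$. Then for every $(x,y)\in\mathcal{S}:=\{(x,y)\in\mathcal{X}^2: Q(x,y)>0\}$ one has $m(t,x,y)=-m(t,y,x)$ for almost every $t\in[0,1]$.
   Context: Let $\mathcal{X}$ be a finite set and $Q:\mathcal{X}\times\mathcal{X}\to[0,\infty)$ with $Q(x,x)=0$, the transition rate matrix of an irreducible continuous-time Markov chain which is reversible with respect to its unique stationary distribution $\pi:\mathcal{X}\to(0,1]$, $\sum_x\pi(x)=1$, i.e. $\pi(x)Q(x,y)=\pi(y)Q(y,x)$ for all $x,y$. Let $\mathcal{P}(\mathcal{X})=\{\rho:\mathcal{X}\to[0,\infty):\sum_x\pi(x)\rho(x)=1\}$. Inner products: $\langle\phi,\psi\rangle_\pi=\sum_x\phi(x)\psi(x)\pi(x)$ on $\mathbb{R}^{\mathcal{X}}$, $\langle\Phi,\Psi\rangle_Q=\frac12\sum_{x,y}\Phi(x,y)\Psi(x,y)Q(x,y)\pi(x)$ on $\mathbb{R}^{\mathcal{X}\times\mathcal{X}}$. Discrete gradient $(\nabla_{\mathcal{X}}\psi)(x,y)=\psi(x)-\psi(y)$. An averaging function $\theta:[0,\infty)^2\to[0,\infty)$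 is fixed which is continuous, concave, 1-homogeneous, symmetric, $C^\infty$ on $(0,\infty)^2$, with $\theta(0,s)=\theta(s,0)=0$, $\theta(s,s)=s$, $\theta(s,t)>0$ for $s,t>0$, and $s\mapsto\theta(t,s)$ nondecreasing for each $t$; it is extended by $\theta(s,t)=-\infty$ if $\min\{s,t\}<0$. Define $\alpha:\mathbb{R}^3\to\mathbb{R}\cup\{\infty\}$ by $\alpha(s,t,m)=m^2/\theta(s,t)$ if $\theta(s,t)>0$, $\alpha=0$ if $\theta(s,t)=0$ and $m=0$, and $\alpha=+\infty$ otherwise. The action of measurable $\rho:[0,1]\to\mathbb{R}^{\mathcal{X}}$, $m:[0,1]\to\mathbb{R}^{\mathcal{X}\times\mathcal{X}}$ is $\mathcal{A}(\rho,m)=\frac12\int_0^1\sum_{x,y}\alpha(\rho(t,x),\rho(t,y),m(t,x,y))Q(x,y)\pi(x)\,dt$. The set $\mathcal{CE}(\rho_A,\rho_B)$ consists of all measurable pairs $(\rho,m)$ with $\int_0^1\langle\partial_t\varphi(t,\cdot),\rho(t,\cdot)\rangle_\pi+\langle\nabla_{\mathcal{X}}\varphi(t,\cdot),m(t,\cdot)\rangle_Q\,dt=\langle\varphi(1,\cdot),\rho_B\rangle_\pi-\langle\varphi(0,\cdot),\rho_A\rangle_\pi$ for all $\varphi\in C^1([0,1],\mathbb{R}^{\mathcal{X}})$. The energy is $\mathcal{E}(\rho,m)=\mathcal{A}(\rho,m)$ if $(\rho,m)\in\mathcal{CE}(\rho_A,\rho_B)$ and $+\infty$ otherwise, and $\mathcal{W}(\rho_A,\rho_B)=\sqrt{\inf\mathcal{E}}$.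 *)

From HB Require Import structures.
From mathcomp Require Import all_boot all_order all_algebra.
From mathcomp Require Import all_classical all_reals all_analysis.
Set Implicit Arguments. Unset Strict Implicit. Unset Printing Implicit Defensive.
Import Order.TTheory GRing.Theory Num.Theory numFieldNormedType.Exports.
Local Open Scope classical_set_scope.
Local Open Scope ring_scope.

Section Defs.
Variable R : realType.

Definition nonneg_quadrant : set (R * R) := [set p | 0 <= p.1 /\ 0 <= p.2].
Definition pos_quadrant : set (R * R) := [set p | 0 < p.1 /\ 0 < p.2].

Definition pd1 (f : R -> R -> R) : R -> R -> R :=
  fun s t => derive1 (fun u => f u t) s.
Definition pd2 (f : R -> R -> R) : R -> R -> R :=
  fun s t => derive1 (fun u => f s u) t.
Definition iter_pd (l : seq bool) (f : R -> R -> R) : R -> R -> R :=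
  foldr (fun b g => if b then pd1 g else pd2 g) f l.

Definition smooth_on (U : set (R * R)) (f : R -> R -> R) : Prop :=
  forall l : seq bool,
    (forall p, U p ->
       derivable (fun u => iter_pd l f u p.2) p.1 1 /\
       derivable (fun u => iter_pd l f p.1 u) p.2 1) /\
    {in U, continuous (fun p : R * R => iter_pd l f p.1 p.2)}.

(* theta : [0,oo)^2 -> [0,oo); its values outside the quadrant are irrelevant
   (the paper extends it by -oo there, which is encoded in [alpha] below) *)
Definition averaging_function (theta : R -> R -> R) : Prop :=
  [/\ [/\ {within nonneg_quadrant, continuous (fun p : R * R => theta p.1 p.2)},
      (forall s1 t1 s2 t2 l, 0 <= s1 -> 0 <= t1 -> 0 <= s2 -> 0 <= t2 ->
         0 <= l <= 1 ->
         l * theta s1 t1 + (1 - l) * theta s2 t2 <=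
           theta (l * s1 + (1 - l) * s2) (l * t1 + (1 - l) * t2)) &
      (forall l s t, 0 <= l -> 0 <= s -> 0 <= t ->
         theta (l * s) (l * t) = l * theta s t)],
      (forall s t, 0 <= s -> 0 <= t -> theta s t = theta t s),
      smooth_on pos_quadrant theta &
      [/\ (forall s, 0 <= s -> theta 0 s = 0 /\ theta s 0 = 0),
          (forall s, 0 <= s -> theta s s = s),
          (forall s t, 0 <= s -> 0 <= t -> 0 <= theta s t),
          (forall s t, 0 < s -> 0 < t -> 0 < theta s t) &
          (forall t s1 s2, 0 <= t -> 0 <= s1 -> s1 <= s2 ->
              theta t s1 <= theta t s2)]].

(* alpha(s,t,m) with the convention theta = -oo outside the quadrant *)
Definition alpha (theta : R -> R -> R) (s t m : R) : \bar R :=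
  if (0 <= s) && (0 <= t) then
    if 0 < theta s t then (m ^+ 2 / theta s t)%:E
    else if m == 0 then 0%E else +oo%E
  else +oo%E.

Variable X : finType.

Definition markov_setting (Q : X -> X -> R) (pi : X -> R) : Prop :=
  [/\ (forall x y, 0 <= Q x y),
      (forall x, Q x x = 0),
      (forall x y, connect (fun a b => 0 < Q a b) x y),
      (forall x, 0 < pi x) & \sum_x pi x = 1 ] /\
  (* reversibility (detailed balance), hence pi is the (unique) stationary law *)
  (forall x y, pi x * Q x y = pi y * Q y x).

Definition prob_density (pi : X -> R) (r : X -> R) : Prop :=
  (forall x, 0 <= r x) /\ \sum_x pi x * r x = 1.

Definition ip_pi (pi : X -> R) (f g : X -> R) : R := \sum_x f x * g x * pi x.
Definition ip_Q (Q : X -> X -> R) (pi : X -> R) (F G : X -> X -> R) : R :=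
  2^-1 * \sum_x \sum_y F x y * G x y * Q x y * pi x.
Definition grad (f : X -> R) : X -> X -> R := fun x y => f x - f y.

Definition I01 : set R := `[0, 1].

Definition meas_rho (rho : R -> X -> R) : Prop :=
  forall x, measurable_fun I01 (fun t => rho t x).
Definition meas_m (m : R -> X -> X -> R) : Prop :=
  forall x y, measurable_fun I01 (fun t => m t x y).

Definition action (theta : R -> R -> R) (Q : X -> X -> R) (pi : X -> R)
  (rho : R -> X -> R) (m : R -> X -> X -> R) : \bar R :=
  ((2:R)^-1)%:E * (\int[@lebesgue_measure R]_(t in I01)
     (\sum_x \sum_y alpha theta (rho t x) (rho t y) (m t x y)
                      * (Q x y * pi x)%:E))%E.

(* C^1 test functions [0,1] -> R^X (given as restrictions of C^1 maps on R) *)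
Definition C1_test (phi : R -> X -> R) : Prop :=
  forall x, (forall t, derivable (fun s => phi s x) t 1) /\
            continuous (derive1 (fun s => phi s x)).

Definition CE (Q : X -> X -> R) (pi : X -> R) (rhoA rhoB : X -> R)
  (rho : R -> X -> R) (m : R -> X -> X -> R) : Prop :=
  meas_rho rho /\ meas_m m /\
  forall phi, C1_test phi ->
    let integrand := fun t =>
      ip_pi pi (fun x => derive1 (fun s => phi s x) t) (rho t)
      + ip_Q Q pi (grad (phi t)) (m t) in
    (@lebesgue_measure R).-integrable I01 (fun t => (integrand t)%:E) /\
    (\int[@lebesgue_measure R]_(t in I01) integrand t
       = ip_pi pi (phi 1) rhoB - ip_pi pi (phi 0) rhoA)%R.

Definition energy theta Q pi rhoA rhoB rho m : \bar R :=
  if `[< CE Q pi rhoA rhoB rho m >] then action theta Q pi rho m else +oo%E.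

(* inf E over all measurable pairs;  W(rhoA, rhoB)^2 = energy_inf *)
Definition energy_inf theta Q pi rhoA rhoB : \bar R :=
  ereal_inf [set e | exists (rho : R -> X -> R) (m : R -> X -> X -> R),
               [/\ meas_rho rho, meas_m m &
                   e = energy theta Q pi rhoA rhoB rho m]].

End Defs.

From HB Require Import structures.
From mathcomp Require Import all_boot all_order all_algebra.
From mathcomp Require Import all_classical all_reals all_analysis.
From mathcomp Require Import ring lra.
From mathcomp Require Import measurable_realfun.
Import Order.TTheory GRing.Theory Num.Theory numFieldNormedType.Exports.
Local Open Scope classical_set_scope.
Local Open Scope ring_scope.
Set Implicit Arguments.
Unset Strict Implicit.

(* By detailed balance, the pairing [<grad phi, m>_Q] only sees the
   antisymmetric part [(m - m^T)/2] of a flux, so replacing [m] by it keeps the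
   continuity equation.  Pointwise, by the parallelogram identity and the
   symmetry of theta, the action density of [m] dominates that of its
   antisymmetric part plus that of its symmetric part [(m + m^T)/2].  For an
   optimal [m] the action cannot decrease, so the action of the symmetric part
   vanishes, i.e. [m(t,x,y) + m(t,y,x) = 0] for a.e. [t] whenever
   [Q(x,y) > 0]. *)

Lemma lee_sum2_symmetrize (R : realDomainType) (I : finType)
    (F G : I -> I -> \bar R) :
  (forall u v, (G u v + G v u <= F u v + F v u)%E) ->
  (\sum_u \sum_v G u v <= \sum_u \sum_v F u v)%E.
Proof.
move=> GF.
have sum2_sym (H : I -> I -> \bar R) : (\sum_u \sum_v (H u v + H v u) =
    \sum_u \sum_v H u v + \sum_u \sum_v H u v)%E.
  under eq_bigr do rewrite big_split.
  by rewrite big_split /= [X in (_ + X)%E]exchange_big.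
have : (\sum_u \sum_v (G u v + G v u) <= \sum_u \sum_v (F u v + F v u))%E.
  by apply: lee_sum => u _; apply: lee_sum => v _.
rewrite !sum2_sym leNgt => /negP GF2; rewrite leNgt; apply/negP => FG.
exact/GF2/lteD.
Qed.

Lemma measurable_fun_ifW d1 d2 (T1 : measurableType d1) (T2 : measurableType d2)
    (D : set T1) (b : T1 -> bool) (g h : T1 -> T2) :
  measurable D -> measurable_fun D b ->
  measurable_fun D g -> measurable_fun D h ->
  measurable_fun D (fun t => if b t then g t else h t).
Proof.
move=> mD mb mg mh; apply: measurable_fun_if => //; exact: measurable_funS mD _ _.
Qed.

Lemma ae_eq0_integral_gap d (T : measurableType d) (R : realType)
    (mu : {measure set T -> \bar R}) (D : set T) (f g h : T -> \bar R) :
  measurable D -> measurable_fun D f -> measurable_fun D g ->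
  measurable_fun D h ->
  (forall t, D t -> 0 <= g t)%E -> (forall t, D t -> 0 <= h t)%E ->
  (forall t, D t -> g t + h t <= f t)%E ->
  (\int[mu]_(t in D) f t <= \int[mu]_(t in D) g t)%E ->
  (\int[mu]_(t in D) f t < +oo)%E ->
  ae_eq mu D h (cst 0).
Proof.
move=> mD mf mg mh g0 h0 ghf If_le If_fin.
have Igh_le : (\int[mu]_(t in D) g t + \int[mu]_(t in D) h t
               <= \int[mu]_(t in D) f t)%E.
  rewrite -ge0_integralD //; apply: ge0_le_integral => //.
    by move=> t Dt; apply: adde_ge0; [exact: g0|exact: h0].
  exact: emeasurable_funD.
have Ig_fin : (\int[mu]_(t in D) g t)%E \is a fin_num.
  rewrite ge0_fin_numE; last exact: integral_ge0.
  apply: le_lt_trans If_fin; apply: le_trans Igh_le.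
  by apply: leeDl; exact: integral_ge0.
have Ih0 : (\int[mu]_(t in D) h t = 0)%E.
  apply/eqP; rewrite eq_le integral_ge0 // andbT.
  by rewrite -(leeD2lE _ _ Ig_fin) adde0; exact: le_trans Igh_le If_le.
apply/(ae_eq_integral_abs mu mD mh); rewrite -Ih0.
by apply: eq_integral => t /[!inE] Dt; rewrite gee0_abs //; exact: h0.
Qed.

Section ThetaMeasurability.
Variable R : realType.

Lemma measurable_invr : measurable_fun [set: R] (fun x : R => x^-1).
Proof.
have -> : (fun x : R => x^-1) = (fun x => if x == 0 then 0 else x^-1).
  by apply: funext => x; case: eqP => // ->; rewrite invr0.
apply: measurable_fun_if => //; first exact: measurable_fun_eqr.
have -> : [set: R] `&` (fun x : R => x == 0) @^-1` [set false] = ~` [set 0].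
  by apply/seteqP; split => x /=; [case=> _ /eqP|move=> /eqP /negbTE ->].
apply: open_continuous_measurable_fun; first by rewrite openC; exact: closed_eq.
by move=> x; rewrite inE /= => /eqP x0; exact: inv_continuous.
Qed.

Lemma continuous_antidiagonal (th : R -> R -> R) :
  {within @nonneg_quadrant R, continuous (fun p : R * R => th p.1 p.2)} ->
  {within `[0, 1], continuous (fun r : R => th r (1 - r))}.
Proof.
move=> /subspace_continuousP th_cont; apply/subspace_continuousP => r r01.
have quadrant_r : @nonneg_quadrant R (r, 1 - r).
  by move: r01; rewrite /= in_itv /= => /andP[r0 r1]; split => /=; lra.
have antidiag_cvg : (fun s : R => (s, 1 - s)) @ within `[0, 1] (nbhs r) -->
    within (@nonneg_quadrant R) (nbhs (r, 1 - r)).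
  have cvg_r : (fun s : R => (s, 1 - s)) @ r --> (r, 1 - r).
    apply: (@cvg_pair _ _ _ _ (nbhs r) (nbhs (1 - r))); first exact: cvg_id.
    by apply: cvgB; [exact: cvg_cst|exact: cvg_id].
  move=> P /= /cvg_r; rewrite /within /= !nbhs_simpl /=.
  apply: filterS => s /= Ps s01; apply: Ps.
  by move: s01; rewrite /= in_itv /= => /andP[s0 s1]; split => /=; lra.
exact: cvg_trans (cvg_app _ antidiag_cvg) (th_cont _ quadrant_r).
Qed.

Definition clamp01 (r : R) : R := Num.min (Num.max r 0) 1.

Definition theta_profile (th : R -> R -> R) (r : R) : R :=
  th (clamp01 r) (1 - clamp01 r).

Lemma measurable_theta_profile (th : R -> R -> R) :
  {within @nonneg_quadrant R, continuous (fun p : R * R => th p.1 p.2)} ->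
  measurable_fun [set: R] (theta_profile th).
Proof.
move=> th_cont.
rewrite (_ : theta_profile th = (fun r => th r (1 - r)) \o clamp01) //.
apply: (@measurable_comp _ _ _ _ _ _ (`[0, 1]%classic : set R)).
  exact: measurable_itv.
- move=> _ [r _ <-]; rewrite /= in_itv /= /clamp01.
  by rewrite le_min ler01 le_max lexx orbT ge_min lexx orbT.
- apply: subspace_continuous_measurable_fun; first exact: measurable_itv.
  exact: continuous_antidiagonal.
- by apply: measurable_minr => //; exact: measurable_maxr.
Qed.

(* Homogeneity reduces [th] on the quadrant to a function of one variable,
   continuous on [0, 1]; this gives measurability of [t |-> th (f t) (g t)]
   without any joint measurability of [th]. *)
Lemma averaging_homogeneousE (th : R -> R -> R) s t :
  averaging_function th -> 0 <= s -> 0 <= t ->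
  th s t = (s + t) * theta_profile th (s / (s + t)).
Proof.
move=> [[_ _ th_hom] _ _ [th_axis _ _ _ _]] s0 t0.
have [st0|st0] := eqVneq (s + t) 0.
  have [-> ->] : s = 0 /\ t = 0 by split; lra.
  by rewrite addr0 mul0r; case: (th_axis 0 (lexx 0)).
have st_gt0 : 0 < s + t by rewrite lt_neqAle eq_sym st0 addr_ge0.
have q0 : 0 <= s / (s + t) by rewrite divr_ge0 // ltW.
have q1 : s / (s + t) <= 1 by rewrite ler_pdivrMr // mul1r lerDl.
rewrite /theta_profile /clamp01 (max_l q0) (min_l q1).
rewrite -th_hom ?subr_ge0 // ?ltW //.
by congr th; field; rewrite gt_eqF.
Qed.

Lemma alpha_eq_quadrant (th th' : R -> R -> R) s t c :
  (forall s t, 0 <= s -> 0 <= t -> th s t = th' s t) ->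
  alpha th s t c = alpha th' s t c.
Proof.
by move=> thE; rewrite /alpha; case: ifP => // /andP[s0 t0]; rewrite thE.
Qed.

Lemma measurable_alpha d (T : measurableType d) (th : R -> R -> R)
    (D : set T) (f g c : T -> R) :
  measurable D -> measurable_fun D (fun x => th (f x) (g x)) ->
  measurable_fun D f -> measurable_fun D g -> measurable_fun D c ->
  measurable_fun D (fun x => alpha th (f x) (g x) (c x)).
Proof.
move=> mD mth mf mg mc; rewrite /alpha.
apply: measurable_fun_ifW => //.
  by apply: measurable_and; apply: measurable_fun_ler.
apply: measurable_fun_ifW => //; first exact: measurable_fun_ltr.
  apply/measurable_EFinP/measurable_funM; first exact: measurable_funX.
  exact: measurableT_comp measurable_invr _.
by apply: measurable_fun_ifW => //; exact: measurable_fun_eqr.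
Qed.

Lemma measurable_alpha_averaging d (T : measurableType d) (th : R -> R -> R)
    (D : set T) (f g c : T -> R) :
  averaging_function th -> measurable D ->
  measurable_fun D f -> measurable_fun D g -> measurable_fun D c ->
  measurable_fun D (fun x => alpha th (f x) (g x) (c x)).
Proof.
move=> th_avg mD mf mg mc.
pose th' s t := (s + t) * theta_profile th (s / (s + t)).
rewrite (_ : (fun x => _) = fun x => alpha th' (f x) (g x) (c x)); last first.
  apply: funext => x; apply: alpha_eq_quadrant => s t.
  exact: averaging_homogeneousE.
apply: measurable_alpha => //.
apply: measurable_funM; first exact: measurable_funD.
have [[th_cont _ _] _ _ _] := th_avg.
apply: measurableT_comp; first exact: measurable_theta_profile.
apply: measurable_funM => //.
apply: measurableT_comp; first exact: measurable_invr.
exact: measurable_funD.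
Qed.

End ThetaMeasurability.

Section AlphaInequalities.
Variables (R : realType) (th : R -> R -> R).

Lemma alpha_ge0 s t c : (0 <= alpha th s t c)%E.
Proof.
rewrite /alpha; case: ifP => // _; case: ifP => [th_gt0|_]; last by case: ifP.
by rewrite lee_fin divr_ge0 ?sqr_ge0 // ltW.
Qed.

Lemma alphaN s t c : alpha th s t (- c) = alpha th s t c.
Proof. by rewrite /alpha sqrrN oppr_eq0. Qed.

Lemma alpha_eq0 s t c : alpha th s t c = 0%E -> c = 0.
Proof.
rewrite /alpha; case: ifP => // _.
case: ifP => [th_gt0|_]; last by case: ifP => // /eqP.
move=> [] /eqP; rewrite mulf_eq0 invr_eq0 (gt_eqF th_gt0) orbF sqrf_eq0.
by move=> /eqP.
Qed.

Lemma alpha_sym s t c :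
  (forall s t, 0 <= s -> 0 <= t -> th s t = th t s) ->
  alpha th s t c = alpha th t s c.
Proof.
move=> th_sym; rewrite /alpha andbC.
by case: ifP => // /andP[t0 s0]; rewrite th_sym.
Qed.

(* The parallelogram identity [a^2 + b^2 = 2 ((a - b)/2)^2 + 2 ((a + b)/2)^2];
   when [th s t = 0] the right-hand side is finite only if [a = b = 0]. *)
Lemma alpha_parallelogram s t a b :
  (alpha th s t ((a - b) / 2) + alpha th s t ((a - b) / 2)
   + (alpha th s t ((a + b) / 2) + alpha th s t ((a + b) / 2))
   <= alpha th s t a + alpha th s t b)%E.
Proof.
rewrite /alpha; case: ifP => _; first case: ifP => [th_gt0|_].
- rewrite -!EFinD lee_fin le_eqVlt; apply/orP; left; apply/eqP.
  by field; rewrite gt_eqF.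
- have [->|a0] := eqVneq a 0; last by rewrite addye ?leey //; case: ifP.
  have [->|b0] := eqVneq b 0; last by rewrite addey ?leey.
  by rewrite subr0 addr0 mul0r eqxx !adde0.
- by rewrite leey.
Qed.

Lemma alpha_pair_split s t a b w :
  (forall s t, 0 <= s -> 0 <= t -> th s t = th t s) -> 0 <= w ->
  (alpha th s t ((a - b) / 2) * w%:E + alpha th s t ((a + b) / 2) * w%:E
   + (alpha th t s ((b - a) / 2) * w%:E + alpha th t s ((b + a) / 2) * w%:E)
   <= alpha th s t a * w%:E + alpha th t s b * w%:E)%E.
Proof.
move=> th_sym w0; rewrite !(alpha_sym t s) //.
rewrite (_ : (b - a) / 2 = - ((a - b) / 2)); last by ring.
rewrite alphaN [b + a]addrC -!ge0_muleDl ?adde_ge0 ?alpha_ge0 //.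
by apply: lee_wpmul2r; rewrite ?lee_fin // addeACA; exact: alpha_parallelogram.
Qed.

End AlphaInequalities.

Section ActionDensity.
Variables (R : realType) (X : finType) (Q : X -> X -> R) (pi : X -> R).
Variable theta : R -> R -> R.
Hypotheses (Q_ge0 : forall x y, 0 <= Q x y) (pi_gt0 : forall x, 0 < pi x).
Hypothesis reversible : forall x y, pi x * Q x y = pi y * Q y x.

Local Notation mu := (@lebesgue_measure R).

Definition action_density (rho : R -> X -> R) (m : R -> X -> X -> R) t :=
  (\sum_x \sum_y alpha theta (rho t x) (rho t y) (m t x y) * (Q x y * pi x)%:E)%E.

Definition antisym_part (m : R -> X -> X -> R) t x y := (m t x y - m t y x) / 2.
Definition sym_part (m : R -> X -> X -> R) t x y := (m t x y + m t y x) / 2.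

Lemma actionE rho m : action theta Q pi rho m =
  ((2:R)^-1%:E * \int[mu]_(t in @I01 R) action_density rho m t)%E.
Proof. by []. Qed.

Lemma action_density_ge0 rho m t : (0 <= action_density rho m t)%E.
Proof.
apply: sume_ge0 => x _; apply: sume_ge0 => y _.
by apply: mule_ge0; rewrite ?alpha_ge0 // lee_fin mulr_ge0 // ltW.
Qed.

Lemma lee_action rho m rho' m' :
  (action theta Q pi rho m <= action theta Q pi rho' m')%E =
  (\int[mu]_(t in @I01 R) action_density rho m t
     <= \int[mu]_(t in @I01 R) action_density rho' m' t)%E.
Proof. by rewrite !actionE lee_pmul2l // lte_fin invr_gt0. Qed.

Lemma action_ltey rho m :
  (action theta Q pi rho m < +oo)%E =
  (\int[mu]_(t in @I01 R) action_density rho m t < +oo)%E.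
Proof.
have : (0 <= \int[mu]_(t in @I01 R) action_density rho m t)%E.
  by apply: integral_ge0 => t _; exact: action_density_ge0.
rewrite actionE; case: (\int[mu]_(t in _) _)%E => [r _| _ |] //.
- by rewrite -EFinM !ltry.
- by rewrite gt0_muley ?lte_fin ?invr_gt0.
Qed.

Lemma measurable_action_density rho m :
  averaging_function theta -> meas_rho rho -> meas_m m ->
  measurable_fun (@I01 R) (action_density rho m).
Proof.
move=> th_avg mrho mm; apply: emeasurable_sum => x; apply: emeasurable_sum => y.
apply: emeasurable_funM; last exact: measurable_cst.
by apply: measurable_alpha_averaging => //; exact: measurable_itv.
Qed.

Lemma meas_m_antisym_part m : meas_m m -> meas_m (antisym_part m).
Proof.
by move=> mm x y; apply: measurable_funM => //; exact: measurable_funB.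
Qed.

Lemma meas_m_sym_part m : meas_m m -> meas_m (sym_part m).
Proof.
by move=> mm x y; apply: measurable_funM => //; exact: measurable_funD.
Qed.

Lemma ip_Q_antisym_part f m t :
  ip_Q Q pi (grad f) (antisym_part m t) = ip_Q Q pi (grad f) (m t).
Proof.
rewrite /ip_Q /grad /antisym_part; congr (_ * _).
set S := \sum_x \sum_y (f x - f y) * m t x y * Q x y * pi x.
have transposeE : \sum_x \sum_y (f x - f y) * m t y x * Q x y * pi x = - S.
  rewrite exchange_big -sumrN; apply: eq_bigr => x _.
  rewrite -sumrN; apply: eq_bigr => y _.
  by rewrite -mulrA [Q y x * _]mulrC -reversible; ring.
transitivity (2^-1 * S - 2^-1 * (- S)); last by field.
rewrite -transposeE /S !mulr_sumr -sumrB; apply: eq_bigr => x _.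
by rewrite !mulr_sumr -sumrB; apply: eq_bigr => y _; ring.
Qed.

Lemma CE_antisym_part rhoA rhoB rho m :
  CE Q pi rhoA rhoB rho m -> CE Q pi rhoA rhoB rho (antisym_part m).
Proof.
move=> [mrho [mm ce]]; split=> //; split; first exact: meas_m_antisym_part.
move=> phi phi_C1; have := ce phi phi_C1.
have -> // : (fun t => ip_pi pi (fun x => derive1 (phi^~ x) t) (rho t)
                       + ip_Q Q pi (grad (phi t)) (antisym_part m t)) =
             (fun t => ip_pi pi (fun x => derive1 (phi^~ x) t) (rho t)
                       + ip_Q Q pi (grad (phi t)) (m t)).
by apply: funext => t; rewrite ip_Q_antisym_part.
Qed.

Lemma action_density_split rho m t :
  (forall s t, 0 <= s -> 0 <= t -> theta s t = theta t s) ->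
  (action_density rho (antisym_part m) t + action_density rho (sym_part m) t
   <= action_density rho m t)%E.
Proof.
move=> th_sym; rewrite /action_density -big_split /=.
under eq_bigr do rewrite -big_split.
apply: lee_sum2_symmetrize => x y /=.
rewrite (mulrC (Q y x)) -reversible (mulrC (pi x)).
exact: alpha_pair_split (mulr_ge0 (Q_ge0 _ _) (ltW (pi_gt0 _))).
Qed.

Lemma action_density_eq0 rho m t x y :
  action_density rho m t = 0%E -> 0 < Q x y -> m t x y = 0.
Proof.
move=> dens0 Qxy.
have term_ge0 u v :
    (0 <= alpha theta (rho t u) (rho t v) (m t u v) * (Q u v * pi u)%:E)%E.
  by apply: mule_ge0; rewrite ?alpha_ge0 // lee_fin mulr_ge0 // ltW.
have : (alpha theta (rho t x) (rho t y) (m t x y) * (Q x y * pi x)%:E == 0)%E.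
  move: dens0 => /eqP; rewrite seq_psume_eq0 => [/allP/(_ x)|u _]; last first.
    by apply: sume_ge0 => v _; exact: term_ge0.
  rewrite mem_index_enum => /(_ isT) /=; rewrite seq_psume_eq0 // => /allP/(_ y).
  by rewrite mem_index_enum => /(_ isT).
rewrite mule_eq0 eqe mulf_eq0 (gt_eqF Qxy) (gt_eqF (pi_gt0 x)) !orbF.
by move=> /eqP /alpha_eq0.
Qed.

End ActionDensity.

Section Optimality.
Variables (R : realType) (X : finType) (Q : X -> X -> R) (pi : X -> R).
Variables (theta : R -> R -> R) (rhoA rhoB : X -> R).

Lemma energy_CE rho m : CE Q pi rhoA rhoB rho m ->
  energy theta Q pi rhoA rhoB rho m = action theta Q pi rho m.
Proof. by rewrite /energy; case: asboolP. Qed.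

Lemma optimal_CE rho m :
  energy theta Q pi rhoA rhoB rho m = energy_inf theta Q pi rhoA rhoB ->
  (energy_inf theta Q pi rhoA rhoB < +oo)%E -> CE Q pi rhoA rhoB rho m.
Proof. by rewrite /energy; case: asboolP => // _ <-; rewrite ltxx. Qed.

Lemma optimal_action_le rho m rho' m' :
  energy theta Q pi rhoA rhoB rho m = energy_inf theta Q pi rhoA rhoB ->
  CE Q pi rhoA rhoB rho m -> CE Q pi rhoA rhoB rho' m' ->
  (action theta Q pi rho m <= action theta Q pi rho' m')%E.
Proof.
move=> opt ce ce'; rewrite -!energy_CE // opt.
by apply: ereal_inf_lbound; exists rho', m'; case: ce' => mrho' [mm' _].
Qed.

End Optimality.

Unset Implicit Arguments.

Theorem lemma2p4 (R : realType) (X : finType) (Q : X -> X -> R) (pi : X -> R)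
  (theta : R -> R -> R) (rhoA rhoB : X -> R)
  (rho : R -> X -> R) (m : R -> X -> X -> R) :
  markov_setting Q pi ->
  averaging_function theta ->
  prob_density pi rhoA -> prob_density pi rhoB ->
  (energy_inf theta Q pi rhoA rhoB < +oo)%E ->
  meas_rho rho -> meas_m m ->
  energy theta Q pi rhoA rhoB rho m = energy_inf theta Q pi rhoA rhoB ->
  forall x y, 0 < Q x y ->
    (@lebesgue_measure R).-negligible
      (@I01 R `&` [set t | m t x y <> - m t y x]).
Proof.
move=> [[Q_ge0 _ _ pi_gt0 _] rev] th_avg _ _ inf_fin mrho mm opt x y Qxy.
have [_ th_sym _ _] := th_avg.
have ce := optimal_CE opt inf_fin.
have action_le := optimal_action_le opt ce (CE_antisym_part rev ce).
have action_fin : (action theta Q pi rho m < +oo)%E.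
  by rewrite -(energy_CE theta ce) opt.
pose density := action_density Q pi theta rho.
have sym_ae0 : ae_eq lebesgue_measure (@I01 R) (density (sym_part m)) (cst 0).
  have mdensity M : meas_m M -> measurable_fun (@I01 R) (density M).
    by move=> mM; exact: measurable_action_density.
  have density_ge0 M t : @I01 R t -> (0 <= density M t)%E.
    by move=> _; exact: action_density_ge0.
  apply: (@ae_eq0_integral_gap _ _ _ lebesgue_measure _
                                (density m) (density (antisym_part m))).
  - exact: measurable_itv.
  - exact: mdensity.
  - by apply: mdensity; exact: meas_m_antisym_part.
  - by apply: mdensity; exact: meas_m_sym_part.
  - exact: density_ge0.
  - exact: density_ge0.
  - by move=> t _; exact: action_density_split.
  - by rewrite -lee_action.
  - by rewrite -action_ltey.
apply: negligibleS sym_ae0 => t [t01 mxy_neq] /(_ t01) /action_density_eq0.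
move=> /(_ Q_ge0 pi_gt0 x y Qxy); rewrite /sym_part => sym0.
by apply: mxy_neq; lra.
Qed.
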